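(* Let $k\ge1$ and let $C_1,\dots,C_t$ be any symmetric chain decomposition of $B_k$ (identified with $\{0,1\}^k$), listed in order of non-increasing length. Define a total order $\preccurlyeq$ on $B_k$ by $\mathbf b\preccurlyeq\mathbf b'$ iff $\mathbf b\in C_i$, $\mathbf b'\in C_j$ with $i<j$, or $\mathbf b,\mathbf b'$ lie in the same $C_i$ and $\mathbf b\subseteq\mathbf b'$. Let $P=\bigcup_{1\le i\le j\le t}P_{ij}$ where $P_{ij}=C_i\times C_j$ for $i<j$ and $P_{ii}=\{(\mathbf b,\mathbf b')\in C_i\times C_i:\mathbf b\subseteq\mathbf b'\}$, and identify $(\mathbf b,\mathbf b')\in P$ with the concatenated string $\mathbf b\mathbf b'^{\,r}\in B_{2k}$ ($\mathbf b'^{\,r}$ the reverse of $\mathbf b'$), with the induced inclusion order. Then $P$ can be partitioned into chains each of which is a saturated chain $x_1<\dots<x_\ell$ in $B_{2k}$ with $|x_1|+|x_\ell|=2k$; and the map $(\mathbf b,\mathbf b')\mapsto\{\mathbf b\mathbf b'^{\,r},\mathbf b'\mathbf b^{\,r}\}$ is an order-preserving bijection from $P$ onto $B_{2k}/G$, where $G=\{1,\rho\}$ with $\rho=(1\;2k)(2\;2k{-}1)\cdots(k\;k{+}1)$.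
   Context: $B_k$ is the Boolean lattice of subsets of $[k]$, identified with binary strings of length $k$. A symmetric chain decomposition of a ranked poset is a partition into saturated chains $x_1<\dots<x_\ell$ with $r(x_1)+r(x_\ell)$ equal to the rank of the poset. For $G\le S_{2k}$, $B_{2k}/G$ is the poset of $G$-orbits $[A]$ ordered by $[A]\le[B]$ iff $X\subseteq Y$ for some $X\in[A]$, $Y\in[B]$. *)

From HB Require Import structures.
From mathcomp Require Import all_boot all_order all_fingroup.
Set Implicit Arguments. Unset Strict Implicit. Unset Printing Implicit Defensive.

(* Subsets of a finite type T, ordered by inclusion, ranked by cardinality.
   B_k is {set 'I_k} (a set = the binary string of its indicator). *)

Definition sat_chain (T : finType) (c : seq {set T}) : bool :=
  if c is x :: c' then
    path (fun a b : {set T} => (a \subset b) && (#|b| == #|a|.+1)) x c'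
  else false.

Definition sym_chain (T : finType) (n : nat) (c : seq {set T}) : bool :=
  if c is x :: c' then #|x| + #|last x c'| == n else false.

Definition is_scd (T : finType) (Q : {set {set T}}) (n : nat)
    (cs : seq (seq {set T})) : bool :=
  all (fun c => sat_chain c && sym_chain n c) cs && perm_eq (flatten cs) (enum Q).

(* the string b b'^r in B_{2k}: positions 0..k-1 read b, position k+j reads
   b' at index k-1-j *)
Definition cat_rev (k : nat) (b b' : {set 'I_k}) : {set 'I_(k + k)} :=
  [set i | match split i with
           | inl j => j \in b
           | inr j => rev_ord j \in b'
           end].

(* P_ij (chains indexed from 0) *)
Definition Pij (k : nat) (cs : seq (seq {set 'I_k})) (i j : nat)
    : {set {set 'I_k} * {set 'I_k}} :=
  [set p | [&& p.1 \in nth [::] cs i, p.2 \in nth [::] cs j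
             & (i < j) || (p.1 \subset p.2)]].

Definition P_pairs (k : nat) (cs : seq (seq {set 'I_k}))
    : {set {set 'I_k} * {set 'I_k}} :=
  \bigcup_(i < size cs) \bigcup_(j < size cs | i <= j) Pij cs i j.

(* rho = (1 2k)(2 2k-1)...(k k+1), i.e. i |-> 2k-1-i on 0-indexed positions *)
Definition rho (k : nat) : {perm 'I_(k + k)} := perm (@rev_ord_inj (k + k)).
Definition Grho (k : nat) : {set {perm 'I_(k + k)}} := [set 1%g; rho k].

Definition qorbit (T : finType) (G : {set {perm T}}) (A : {set T})
    : {set {set T}} := [set [set (s : {perm T}) x | x in A] | s in G].
Definition quot_poset (T : finType) (G : {set {perm T}}) : {set {set {set T}}} :=
  [set qorbit G A | A : {set T}].
Definition qle (T : finType) (X Y : {set {set T}}) : bool :=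
  [exists x in X, exists y in Y, x \subset y].

Definition pair_map (k : nat) (p : {set 'I_k} * {set 'I_k}) : {set {set 'I_(k + k)}} :=
  [set cat_rev p.1 p.2; cat_rev p.2 p.1].

(* Fix a symmetric chain decomposition C_0, ..., C_{t-1} of B_k, listed by
   non-increasing length, and write every b in B_k by its coordinates (i, x):
   b is the x-th element of C_i.  A pair (b, b') is in P exactly when
   b "precedes" b' in the total order of the statement.

   A string of B_{2k} is b b'^r for a unique pair (b, b'),
     its rho-image is b' b^r, so its orbit is pair_map (b, b').  Since the
     order on B_k is total and antisymmetric, exactly one of (b, b'), (b', b)
     lies in P, up to b = b'; hence pair_map is a bijection from P onto
     B_{2k}/G, and it is monotone by definition of the quotient order.
   - Chain part.  In coordinates, P_ij (i < j) is the product of two chains of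
     lengths m_i >= m_j, and P_ii is the triangle {x <= y} of C_i x C_i.  Both
     are covered by "hooks": lattice paths going straight in one coordinate
     and then turning.  Each hook is a saturated chain of B_{2k} whose ends
     have ranks summing to 2k, and every point lies on exactly one hook. *)

From HB Require Import structures.
From mathcomp Require Import all_boot all_order all_fingroup.
From mathcomp Require Import zify.

Set Implicit Arguments. Unset Strict Implicit. Unset Printing Implicit Defensive.

Section Halves.
Variable k : nat.
Implicit Types (b c : {set 'I_k}) (A : {set 'I_(k + k)}).

Lemma split_lshift (j : 'I_k) : split (lshift k j) = inl j.
Proof. exact: (unsplitK (inl j)). Qed.

Lemma split_rshift (j : 'I_k) : split (rshift k j) = inr j.
Proof. exact: (unsplitK (inr j)). Qed.

Definition lhalf A : {set 'I_k} := [set j | lshift k j \in A].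
Definition rhalf A : {set 'I_k} := [set j | rshift k (rev_ord j) \in A].

Lemma lhalf_cat_rev b c : lhalf (cat_rev b c) = b.
Proof. by apply/setP=> j; rewrite !inE split_lshift. Qed.

Lemma rhalf_cat_rev b c : rhalf (cat_rev b c) = c.
Proof. by apply/setP=> j; rewrite !inE split_rshift rev_ordK. Qed.

Lemma cat_rev_halves A : cat_rev (lhalf A) (rhalf A) = A.
Proof. by apply/setP=> i; rewrite !inE; case: split_ordP => j ->; rewrite inE ?rev_ordK. Qed.

Lemma cat_rev_inj b b' c c' : cat_rev b b' = cat_rev c c' -> b = c /\ b' = c'.
Proof.
move=> E; split; [have := congr1 lhalf E | have := congr1 rhalf E];
  by rewrite ?lhalf_cat_rev ?rhalf_cat_rev.
Qed.

(* Inclusion in B_{2k} is inclusion in both halves: P carries the product order. *)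
Lemma subset_cat_rev b b' c c' :
  (cat_rev b b' \subset cat_rev c c') = (b \subset c) && (b' \subset c').
Proof.
apply/idP/andP => [sub | [/subsetP sbc /subsetP sbc']].
  split; apply/subsetP => j jb.
    by have := subsetP sub (lshift k j); rewrite !inE split_lshift; apply.
  by have := subsetP sub (rshift k (rev_ord j)); rewrite !inE split_rshift rev_ordK; apply.
by apply/subsetP => i; rewrite !inE; case: (split i) => j; [apply: sbc | apply: sbc'].
Qed.

Lemma card_cat_rev b b' : #|cat_rev b b'| = #|b| + #|b'|.
Proof.
rewrite -!sum1_card big_split_ord /=; congr (_ + _).
  by apply: eq_bigl => j; rewrite inE split_lshift.
rewrite (reindex_inj rev_ord_inj) /=.
by apply: eq_bigl => j; rewrite inE split_rshift rev_ordK.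
Qed.

Lemma rev_ord_lshift (j : 'I_k) : rev_ord (lshift k j) = rshift k (rev_ord j).
Proof. by apply: val_inj => /=; have := ltn_ord j; lia. Qed.

Lemma rev_ord_rshift (j : 'I_k) : rev_ord (rshift k j) = lshift k (rev_ord j).
Proof. by apply: val_inj => /=; have := ltn_ord j; lia. Qed.

Lemma rho_cat_rev b b' : [set rho k x | x in cat_rev b b'] = cat_rev b' b.
Proof.
apply/setP=> i; apply/imsetP/idP => [[x xA ->] | iA].
  by move: xA; rewrite !inE permE; case: split_ordP => j ->;
    rewrite ?rev_ord_lshift ?rev_ord_rshift ?split_lshift ?split_rshift ?rev_ordK.
exists (rho k i); last by rewrite !permE rev_ordK.
by move: iA; rewrite !inE permE; case: split_ordP => j ->;
  rewrite ?rev_ord_lshift ?rev_ord_rshift ?split_lshift ?split_rshift ?rev_ordK.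
Qed.

Lemma qorbit_cat_rev b b' : qorbit (Grho k) (cat_rev b b') = pair_map (b, b').
Proof.
rewrite /qorbit /Grho imsetU1 imset_set1 rho_cat_rev; congr (_ |: _).
by rewrite (eq_imset _ (fun x => perm1 x)) imset_id.
Qed.

Lemma pair_map_mono (p q : {set 'I_k} * {set 'I_k}) :
  cat_rev p.1 p.2 \subset cat_rev q.1 q.2 -> qle (pair_map p) (pair_map q).
Proof.
move=> sub; apply/existsP; exists (cat_rev p.1 p.2); rewrite set21 /=.
by apply/existsP; exists (cat_rev q.1 q.2); rewrite set21.
Qed.

End Halves.

Lemma path_iota (r : rel nat) a n :
  (forall t, a <= t < a + n -> r t t.+1) -> path r a (iota a.+1 n).
Proof.
elim: n a => [|n IHn] a steps //=; rewrite steps ?leqnn ?addnS ?ltnS ?leq_addr //=.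
by apply: IHn => t /andP[lt_at lt_tn]; apply: steps; rewrite ltnW //= addnS.
Qed.

Lemma last_iota a n : last a (iota a.+1 n) = a + n.
Proof. by elim: n a => [|n IHn] a /=; rewrite ?addn0 // IHn addnS. Qed.

Section SaturatedChains.
Variable T : finType.
Implicit Type c : seq {set T}.

Lemma sat_chain_step c t : sat_chain c -> t.+1 < size c ->
  nth set0 c t \subset nth set0 c t.+1 /\ #|nth set0 c t.+1| = #|nth set0 c t|.+1.
Proof.
case: c => [|x c'] //= /(pathP set0) steps lt_t.
by have /andP[-> /eqP ->] := steps t lt_t.
Qed.

Lemma card_sat_chain c t : sat_chain c -> t < size c ->
  #|nth set0 c t| = #|nth set0 c 0| + t.
Proof.
move=> sat_c; elim: t => [|t IHt] lt_t; first by rewrite addn0.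
have [_ ->] := sat_chain_step sat_c lt_t.
by rewrite IHt ?addnS // ltnW.
Qed.

Lemma sat_chain_mono c x y : sat_chain c -> x <= y -> y < size c ->
  nth set0 c x \subset nth set0 c y.
Proof.
move=> sat_c le_xy; elim: y le_xy => [|y IHy]; first by rewrite leqn0 => /eqP ->.
rewrite leq_eqVlt => /orP[/eqP -> // | lt_xy] lt_y.
have [sub _] := sat_chain_step sat_c lt_y.
by apply: subset_trans sub; apply: IHy => //; apply: ltnW.
Qed.

Lemma sym_sat_chain c n : sat_chain c -> sym_chain n c ->
  #|nth set0 c 0|.*2 + (size c).-1 = n.
Proof.
case: c => [|x c'] // sat_c /eqP <-; rewrite -addnn -addnA; congr (_ + _).
have /= <- := card_sat_chain sat_c (ltnSn (size c')).
by rewrite -[last x c']/(last set0 (x :: c')) -nth_last.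
Qed.

Lemma sat_chain_iota (f : nat -> {set T}) L :
  (forall t, t < L -> (f t \subset f t.+1) && (#|f t.+1| == #|f t|.+1)) ->
  sat_chain [seq f t | t <- iota 0 L.+1].
Proof. by move=> steps; rewrite /= path_map; apply: path_iota => t /andP[_]; apply: steps. Qed.

Lemma sym_chain_iota (f : nat -> {set T}) L n :
  #|f 0| + #|f L| = n -> sym_chain n [seq f t | t <- iota 0 L.+1].
Proof. by move=> sum_n; rewrite /= last_map last_iota sum_n. Qed.

End SaturatedChains.

Lemma uniq_flatten_block (T : eqType) (ss : seq (seq T)) i j x : uniq (flatten ss) ->
  i < size ss -> j < size ss -> x \in nth [::] ss i -> x \in nth [::] ss j -> i = j.
Proof.
elim: ss i j => [|s ss IHss] [|i] [|j] //=; rewrite cat_uniq => /and3P[_ disj uniq_ss].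
- move=> _ lt_j xs xj; case/negP: disj; apply/hasP; exists x => //.
  by apply/flattenP; exists (nth [::] ss j); rewrite ?mem_nth.
- move=> lt_i _ xi xs; case/negP: disj; apply/hasP; exists x => //.
  by apply/flattenP; exists (nth [::] ss i); rewrite ?mem_nth.
- by move=> lt_i lt_j xi xj; rewrite (IHss i j).
Qed.

Lemma uniq_flatten_keyed (T K : eqType) (key : T -> K) (ks : seq K) (f : K -> seq T) :
  uniq ks -> {in ks, forall kk, uniq (f kk)} ->
  {in ks, forall kk, {in f kk, forall z, key z = kk}} ->
  uniq (flatten (map f ks)).
Proof.
elim: ks => [|kk ks IHks] //= /andP[kk_ks uniq_ks] uniq_f key_f.
have uniq_tail : uniq (flatten (map f ks)).
  apply: IHks => // [kk' kk'_ks | kk' kk'_ks]; [apply: uniq_f | apply: key_f];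
    by rewrite inE kk'_ks orbT.
rewrite cat_uniq uniq_f ?mem_head //= uniq_tail andbT.
apply/hasP=> -[z /flatten_mapP[kk' kk'_ks z_kk'] z_kk].
have key_kk := key_f kk (mem_head _ _) z z_kk.
have key_kk' : key z = kk' by apply: key_f; rewrite // inE kk'_ks orbT.
by move: kk_ks; rewrite -key_kk key_kk' kk'_ks.
Qed.

Section SCDCoordinates.
Variables (k : nat) (cs : seq (seq {set 'I_k})).
Hypothesis scd : is_scd [set: {set 'I_k}] k cs.

Definition chain_at i : seq {set 'I_k} := nth [::] cs i.
Definition elt i x : {set 'I_k} := nth set0 (chain_at i) x.
Definition len i : nat := (size (chain_at i)).-1.
Definition rank0 i : nat := #|elt i 0|.

Lemma chain_at_sat_sym i : i < size cs -> sat_chain (chain_at i) /\ sym_chain k (chain_at i).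
Proof. by case/andP: scd => /allP chains _ lt_i; apply/andP/chains/mem_nth. Qed.

Lemma ltn_len i x : i < size cs -> (x < size (chain_at i)) = (x <= len i).
Proof. by move=> /chain_at_sat_sym[]; rewrite /len; case: (chain_at i). Qed.

Lemma mem_elt i x : i < size cs -> x <= len i -> elt i x \in chain_at i.
Proof. by move=> lt_i le_x; rewrite mem_nth ?ltn_len. Qed.

Lemma card_elt i x : i < size cs -> x <= len i -> #|elt i x| = rank0 i + x.
Proof.
by move=> lt_i; rewrite -ltn_len // => lt_x; have [sat _] := chain_at_sat_sym lt_i;
  rewrite /elt card_sat_chain.
Qed.

Lemma rank0_len i : i < size cs -> (rank0 i).*2 + len i = k.
Proof. by move=> /chain_at_sat_sym[sat sym]; apply: sym_sat_chain. Qed.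

Lemma elt_mono i x y : i < size cs -> x <= y -> y <= len i -> elt i x \subset elt i y.
Proof.
by move=> lt_i le_xy; rewrite -ltn_len // => lt_y; have [sat _] := chain_at_sat_sym lt_i;
  apply: sat_chain_mono.
Qed.

Lemma elt_subset_leq i x y : i < size cs -> x <= len i -> y <= len i ->
  elt i x \subset elt i y -> x <= y.
Proof. by move=> lt_i le_x le_y /subset_leq_card; rewrite !card_elt // leq_add2l. Qed.

Lemma elt_inj i x y : i < size cs -> x <= len i -> y <= len i -> elt i x = elt i y -> x = y.
Proof.
move=> lt_i le_x le_y E; apply/eqP; rewrite eqn_leq.
by rewrite (elt_subset_leq lt_i le_x le_y) ?(elt_subset_leq lt_i le_y le_x) ?E.
Qed.

Lemma mem_chain_at i b : i < size cs ->
  (b \in chain_at i) <-> exists2 x, x <= len i & b = elt i x.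
Proof.
move=> lt_i; split => [b_i | [x le_x ->]]; last exact: mem_elt.
by exists (index b (chain_at i)); rewrite -?ltn_len ?index_mem // /elt nth_index.
Qed.

Lemma chain_at_disjoint i j b : i < size cs -> j < size cs ->
  b \in chain_at i -> b \in chain_at j -> i = j.
Proof.
case/andP: scd => _ perm_cs; apply: uniq_flatten_block.
by rewrite (perm_uniq perm_cs) enum_uniq.
Qed.

Lemma elt_coords b : exists i x, [/\ i < size cs, x <= len i & b = elt i x].
Proof.
case/andP: scd => _ perm_cs.
have /flattenP[c c_cs b_c] : b \in flatten cs by rewrite (perm_mem perm_cs) mem_enum inE.
have lt_i : index c cs < size cs by rewrite index_mem.
have [x le_x ->] : exists2 x, x <= len (index c cs) & b = elt (index c cs) x.
  by apply/mem_chain_at; rewrite // /chain_at nth_index.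
by exists (index c cs), x.
Qed.

Lemma P_pairsP p : p \in P_pairs cs <-> exists i j, [/\ i <= j, j < size cs,
  p.1 \in chain_at i, p.2 \in chain_at j & (i < j) || (p.1 \subset p.2)].
Proof.
split => [/bigcupP[i _ /bigcupP[j le_ij]] | [i [j [le_ij lt_j p1_i p2_j ord_p]]]].
  by rewrite inE => /and3P[p1_i p2_j ord_p]; exists i, j.
have lt_i : i < size cs by apply: leq_ltn_trans lt_j.
apply/bigcupP; exists (Ordinal lt_i) => //; apply/bigcupP; exists (Ordinal lt_j) => //.
by rewrite inE p1_i p2_j.
Qed.

(* ((i, j), (x, y)) stands for the pair (elt i x, elt j y); P_coord cuts out
   the coordinates of the pairs of P. *)
Definition coord := ((nat * nat) * (nat * nat))%type.

Definition P_coord (z : coord) : bool :=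
  [&& z.1.1 <= z.1.2, z.1.2 < size cs, z.2.1 <= len z.1.1, z.2.2 <= len z.1.2
    & (z.1.1 < z.1.2) || (z.2.1 <= z.2.2)].

Lemma P_coord_first_lt (z : coord) : P_coord z -> z.1.1 < size cs.
Proof. by case/and5P => le_ij lt_j _ _ _; apply: leq_ltn_trans lt_j. Qed.

Lemma P_pairs_coords p :
  p \in P_pairs cs <-> exists2 z, P_coord z & p = (elt z.1.1 z.2.1, elt z.1.2 z.2.2).
Proof.
rewrite P_pairsP; split => [[i [j [le_ij lt_j p1_i p2_j ord_p]]] | [[[i j] [x y]]]].
  have lt_i := leq_ltn_trans le_ij lt_j.
  have [x le_x E1] := (mem_chain_at _ lt_i).1 p1_i.
  have [y le_y E2] := (mem_chain_at _ lt_j).1 p2_j.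
  exists ((i, j), (x, y)); last by rewrite -E1 -E2 -surjective_pairing.
  rewrite /P_coord /= le_ij lt_j le_x le_y /=.
  case: (ltngtP i j) le_ij ord_p => // eq_ij _; rewrite /= E1 E2.
  by move: le_y; rewrite -eq_ij; apply: elt_subset_leq.
case/and5P => /= le_ij lt_j le_x le_y ord_xy ->; have lt_i := leq_ltn_trans le_ij lt_j.
exists i, j; split; rewrite ?mem_elt //.
case: (ltngtP i j) le_ij ord_xy => // eq_ij _ /= le_xy.
by move: le_y; rewrite -eq_ij; apply: elt_mono.
Qed.

End SCDCoordinates.

Section QuotientBijection.
Variables (k : nat) (cs : seq (seq {set 'I_k})).
Hypothesis scd : is_scd [set: {set 'I_k}] k cs.

Lemma P_pairs_antisym p : p \in P_pairs cs -> (p.2, p.1) \in P_pairs cs -> p.1 = p.2.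
Proof.
move=> /P_pairsP[i [j [le_ij lt_j p1_i p2_j ord_p]]].
move=> /P_pairsP[i' [j' [le_ij' lt_j' /= p2_i' p1_j' ord_p']]].
have lt_i := leq_ltn_trans le_ij lt_j; have lt_i' := leq_ltn_trans le_ij' lt_j'.
have eq_ij' := chain_at_disjoint scd lt_i lt_j' p1_i p1_j'.
have eq_ji' := chain_at_disjoint scd lt_j lt_i' p2_j p2_i'.
have eq_ij : i = j by lia.
move: ord_p ord_p'; rewrite -eq_ij' -eq_ji' -eq_ij ltnn /= => sub12 sub21.
by apply/eqP; rewrite eqEsubset sub12.
Qed.

Lemma P_pairs_total b b' : ((b, b') \in P_pairs cs) || ((b', b) \in P_pairs cs).
Proof.
have [i [x [lt_i le_x ->]]] := elt_coords scd b.
have [j [y [lt_j le_y ->]]] := elt_coords scd b'.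
have in_P z : P_coord cs z -> (elt cs z.1.1 z.2.1, elt cs z.1.2 z.2.2) \in P_pairs cs.
  by move=> Pz; apply/(P_pairs_coords scd); exists z.
case: (ltngtP i j) => [lt_ij | lt_ji | eq_ij]; last subst j.
- apply/orP; left; apply: (in_P ((i, j), (x, y))).
  by rewrite /P_coord /= (ltnW lt_ij) lt_ij lt_j le_x le_y.
- apply/orP; right; apply: (in_P ((j, i), (y, x))).
  by rewrite /P_coord /= (ltnW lt_ji) lt_ji lt_i le_x le_y.
- case: (leqP x y) => [le_xy | /ltnW le_yx]; apply/orP; [left | right].
    by apply: (in_P ((i, i), (x, y))); rewrite /P_coord /= leqnn lt_i le_x le_y le_xy orbT.
  by apply: (in_P ((i, i), (y, x))); rewrite /P_coord /= leqnn lt_i le_x le_y le_yx orbT.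
Qed.

Lemma pair_map_inj : {in P_pairs cs &, injective (@pair_map k)}.
Proof.
move=> p q p_P q_P eq_pq.
have : cat_rev p.1 p.2 \in pair_map q by rewrite -eq_pq set21.
rewrite in_set2 => /orP[] /eqP /cat_rev_inj [E1 E2].
  by rewrite [p]surjective_pairing [q]surjective_pairing E1 E2.
have q12 : q.1 = q.2 by apply: P_pairs_antisym; rewrite // -E1 -E2 -surjective_pairing.
by rewrite [p]surjective_pairing [q]surjective_pairing E1 E2 q12.
Qed.

Lemma pair_map_onto : @pair_map k @: P_pairs cs = quot_poset (Grho k).
Proof.
apply/setP=> X; apply/imsetP/imsetP => [[p _ ->] | [A _ ->]].
  by exists (cat_rev p.1 p.2); rewrite // qorbit_cat_rev; case: p.
rewrite -(cat_rev_halves A) qorbit_cat_rev.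
have /orP[P_AA | P_AA] := P_pairs_total (lhalf A) (rhalf A).
  by exists (lhalf A, rhalf A).
by exists (rhalf A, lhalf A); rewrite // /pair_map setUC.
Qed.

End QuotientBijection.

Definition hook (sw : bool) (x0 y0 a t : nat) : nat * nat :=
  if t <= a then (if sw then (x0, y0 + t) else (x0 + t, y0))
  else (if sw then (x0 + (t - a), y0 + a) else (x0 + a, y0 + (t - a))).

Lemma hook_step sw x0 y0 a t :
  hook sw x0 y0 a t.+1 = ((hook sw x0 y0 a t).1.+1, (hook sw x0 y0 a t).2) \/
  hook sw x0 y0 a t.+1 = ((hook sw x0 y0 a t).1, (hook sw x0 y0 a t).2.+1).
Proof.
rewrite /hook; case: sw; case: (leqP t.+1 a) => ?; case: (leqP t a) => ? /=;
  try (left; congr pair; lia); try (right; congr pair; lia); lia.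
Qed.

Lemma hook_sum sw x0 y0 a t : (hook sw x0 y0 a t).1 + (hook sw x0 y0 a t).2 = x0 + y0 + t.
Proof. by rewrite /hook; case: sw; case: (leqP t a) => ? /=; lia. Qed.

(* In the rectangle [0, mi] x [0, mj] (mj <= mi), hook number s starts at
   (0, s), turns at (mi - s, s) and ends at (mi - s, mj); s is recovered from
   any of its points (x, y) as min(y, mi - x). *)
Lemma rect_hook_valid (mi mj s t : nat) : mj <= mi -> s <= mj -> t <= (mi - s) + (mj - s) ->
  [/\ (hook false 0 s (mi - s) t).1 <= mi, (hook false 0 s (mi - s) t).2 <= mj &
      minn (hook false 0 s (mi - s) t).2 (mi - (hook false 0 s (mi - s) t).1) = s].
Proof. by rewrite /hook; case: (leqP t (mi - s)) => ? /= le_mji le_s le_t; split; lia. Qed.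

Lemma rect_hook_onto mi mj x y : mj <= mi -> x <= mi -> y <= mj ->
  let s := minn y (mi - x) in
  s <= mj /\ exists2 t, t <= (mi - s) + (mj - s) & hook false 0 s (mi - s) t = (x, y).
Proof.
move=> le_mji le_x le_y s; split; first lia.
case: (leqP y (mi - x)) => le_s.
  have -> : s = y by lia.
  by exists x; [lia | rewrite /hook ifT; [rewrite add0n | lia]].
have -> : s = mi - x by lia.
exists (x + (y - (mi - x))); first lia.
by rewrite /hook ifF; [congr pair; lia | lia].
Qed.

(* In the triangle {x <= y <= m}, hook number s starts at (s, s), turns at
   (s, m - s) and ends at (m - s, m - s); s = min(x, m - y). *)
Lemma tri_hook_valid (m s t : nat) : s.*2 <= m -> t <= (m - s.*2) + (m - s.*2) ->
  [/\ (hook true s s (m - s.*2) t).1 <= (hook true s s (m - s.*2) t).2,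
      (hook true s s (m - s.*2) t).2 <= m &
      minn (hook true s s (m - s.*2) t).1 (m - (hook true s s (m - s.*2) t).2) = s].
Proof. by rewrite /hook; case: (leqP t (m - s.*2)) => ? /= le_s le_t; split; lia. Qed.

Lemma tri_hook_onto m x y : x <= y -> y <= m ->
  let s := minn x (m - y) in
  s.*2 <= m /\
  exists2 t, t <= (m - s.*2) + (m - s.*2) & hook true s s (m - s.*2) t = (x, y).
Proof.
move=> le_xy le_y s; split; first lia.
case: (leqP x (m - y)) => le_s.
  have -> : s = x by lia.
  by exists (y - x); [lia | rewrite /hook ifT; [congr pair; lia | lia]].
have -> : s = m - y by lia.
exists ((m - (m - y).*2) + (x - (m - y))); first lia.
by rewrite /hook ifF; [congr pair; lia | lia].
Qed.

Section ChainDecomposition.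
Variables (k : nat) (cs : seq (seq {set 'I_k})).
Hypotheses (scd : is_scd [set: {set 'I_k}] k cs) (sorted_cs : sorted geq (map size cs)).

Lemma len_mono i j : i <= j -> j < size cs -> len cs j <= len cs i.
Proof.
move=> le_ij lt_j; have lt_i := leq_ltn_trans le_ij lt_j.
have geq_trans : transitive geq by move=> a b c le_ab le_bc; apply: leq_trans le_bc le_ab.
have := sorted_leq_nth geq_trans leqnn 0 sorted_cs.
move=> /(_ i j); rewrite !inE size_map !(nth_map [::]) // => /(_ lt_i lt_j le_ij) le_size.
by rewrite /len /chain_at; lia.
Qed.

Definition string_at (z : coord) : {set 'I_(k + k)} :=
  cat_rev (elt cs z.1.1 z.2.1) (elt cs z.1.2 z.2.2).

Lemma card_string_at z : P_coord cs z ->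
  #|string_at z| = rank0 cs z.1.1 + rank0 cs z.1.2 + (z.2.1 + z.2.2).
Proof.
move=> Pz; have lt_i := P_coord_first_lt Pz; case/and5P: Pz => _ lt_j le_x le_y _.
by rewrite card_cat_rev !card_elt //; lia.
Qed.

Lemma string_at_step z z' : P_coord cs z -> P_coord cs z' -> z'.1 = z.1 ->
  z'.2 = (z.2.1.+1, z.2.2) \/ z'.2 = (z.2.1, z.2.2.+1) ->
  (string_at z \subset string_at z') && (#|string_at z'| == #|string_at z|.+1).
Proof.
move=> Pz Pz'; rewrite !card_string_at //; have lt_i := P_coord_first_lt Pz.
case: z Pz lt_i => [[i j] [x y]] _; case: z' Pz' => [ij [x' y']] Pz' /= lt_i eq_ij.
move: Pz'; rewrite eq_ij => /and5P[/= _ lt_j le_x' le_y' _].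
rewrite /string_at subset_cat_rev /=.
by case=> -[ex ey]; subst x' y'; rewrite ?subxx elt_mono ?leqnSn //=; apply/eqP; lia.
Qed.

Lemma string_at_inj : {in P_coord cs &, injective string_at}.
Proof.
move=> [[i j] [x y]] [[i' j'] [x' y']] Pz Pz' /cat_rev_inj /= [E1 E2].
have lt_i := P_coord_first_lt Pz; have lt_i' := P_coord_first_lt Pz'.
case/and5P: Pz => /= _ lt_j le_x le_y _; case/and5P: Pz' => /= _ lt_j' le_x' le_y' _.
have eq_i : i = i'.
  by apply: (chain_at_disjoint scd lt_i lt_i' (mem_elt scd lt_i le_x)); rewrite E1 mem_elt.
have eq_j : j = j'.
  by apply: (chain_at_disjoint scd lt_j lt_j' (mem_elt scd lt_j le_y)); rewrite E2 mem_elt.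
subst i' j'.
by rewrite (elt_inj scd lt_i le_x le_x' E1) (elt_inj scd lt_j le_y le_y' E2).
Qed.

(* The key ((i, j), s) names hook number s of the block P_ij; it is valid when
   that hook exists.  chain_point kk t is the t-th point of the hook, which
   has key_steps kk steps, and key_of recovers the key from any point. *)
Definition key := ((nat * nat) * nat)%type.

Definition valid_key (kk : key) : bool :=
  if kk.1.1 < kk.1.2 then (kk.1.2 < size cs) && (kk.2 <= len cs kk.1.2)
  else (kk.1.1 == kk.1.2) && (kk.1.1 < size cs) && (kk.2.*2 <= len cs kk.1.1).

Definition key_steps (kk : key) : nat :=
  if kk.1.1 < kk.1.2 then (len cs kk.1.1 - kk.2) + (len cs kk.1.2 - kk.2)
  else (len cs kk.1.1 - kk.2.*2) + (len cs kk.1.1 - kk.2.*2).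

Definition chain_point (kk : key) (t : nat) : coord :=
  (kk.1, if kk.1.1 < kk.1.2 then hook false 0 kk.2 (len cs kk.1.1 - kk.2) t
         else hook true kk.2 kk.2 (len cs kk.1.1 - kk.2.*2) t).

Definition key_of (z : coord) : key :=
  (z.1, if z.1.1 < z.1.2 then minn z.2.2 (len cs z.1.1 - z.2.1)
        else minn z.2.1 (len cs z.1.1 - z.2.2)).

Lemma chain_point_valid kk t : valid_key kk -> t <= key_steps kk ->
  P_coord cs (chain_point kk t) /\ key_of (chain_point kk t) = kk.
Proof.
case: kk => [[i j] s]; rewrite /valid_key /key_steps /chain_point /key_of /P_coord /=.
case: (ltngtP i j) => [lt_ij /andP[lt_j le_s] le_t | // | <- /andP[/andP[_ lt_i] le_s] le_t].
- have [-> -> ->] := rect_hook_valid (len_mono (ltnW lt_ij) lt_j) le_s le_t.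
  by rewrite lt_j.
- have [le_xy le_y ->] := tri_hook_valid le_s le_t.
  by rewrite lt_i le_y (leq_trans le_xy le_y) le_xy.
Qed.

Lemma chain_point_onto z : P_coord cs z ->
  exists kk t, [/\ valid_key kk, t <= key_steps kk & z = chain_point kk t].
Proof.
case: z => [[i j] [x y]]; case/and5P => /= le_ij lt_j le_x le_y.
case: (ltngtP i j) le_ij => // [lt_ij | eq_ij] _ /= ord_xy.
- have [le_s [t le_t E]] := rect_hook_onto (len_mono (ltnW lt_ij) lt_j) le_x le_y.
  exists ((i, j), minn y (len cs i - x)), t.
  by rewrite /valid_key /key_steps /chain_point /= lt_ij lt_j le_s E.
- subst j; have [le_s [t le_t E]] := tri_hook_onto ord_xy le_y.
  exists ((i, i), minn x (len cs i - y)), t.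
  by rewrite /valid_key /key_steps /chain_point /= ltnn eqxx lt_j le_s E.
Qed.

Definition keys : seq key :=
  [seq kk <- undup [seq (ij, s) | ij <- [seq (i, j) | i <- iota 0 (size cs),
                                                      j <- iota 0 (size cs)],
                                  s <- iota 0 k.+1]
     | valid_key kk].

Lemma mem_keys kk : (kk \in keys) = valid_key kk.
Proof.
rewrite mem_filter andb_idr // mem_undup; case: kk => [[i j] s] valid.
have [lt_i lt_j le_s] : [/\ i < size cs, j < size cs & s <= k].
  move: valid; rewrite /valid_key /=.
  case: ltnP => [lt_ij /andP[lt_j le_s] | _ /andP[/andP[/eqP <- lt_i] le_s]].
  - have := rank0_len scd lt_j; split; [exact: ltn_trans lt_j | done | lia].
  - by have := rank0_len scd lt_i; split; [| | lia].
by apply: allpairs_f; [apply: allpairs_f |]; rewrite mem_iota.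
Qed.

Definition coord_chain (kk : key) : seq coord :=
  [seq chain_point kk t | t <- iota 0 (key_steps kk).+1].

Definition P_chains : seq (seq {set 'I_(k + k)}) :=
  [seq map string_at (coord_chain kk) | kk <- keys].

Lemma mem_coord_chain kk z :
  z \in coord_chain kk -> exists2 t, t <= key_steps kk & z = chain_point kk t.
Proof. by case/mapP => t; rewrite mem_iota add0n ltnS => le_t ->; exists t. Qed.

Lemma string_chain_scd kk : valid_key kk ->
  sat_chain (map string_at (coord_chain kk)) &&
  sym_chain (k + k) (map string_at (coord_chain kk)).
Proof.
move=> valid; have Pt t : t <= key_steps kk -> P_coord cs (chain_point kk t).
  by move=> le_t; case: (chain_point_valid valid le_t).
rewrite /coord_chain -map_comp; apply/andP; split.
  apply: sat_chain_iota => t lt_t /=.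
  apply: string_at_step; [exact/Pt/ltnW | exact: Pt | by [] |].
  by rewrite /chain_point /=; case: ifP => _; apply: hook_step.
apply: sym_chain_iota => /=; rewrite !card_string_at ?Pt // /chain_point /=.
case: kk valid {Pt} => [[i j] s]; rewrite /valid_key /key_steps /=.
case: (ltngtP i j) => [lt_ij /andP[lt_j le_s] | // | <- /andP[/andP[_ lt_i] le_s]];
  rewrite !hook_sum.
- have lt_i := ltn_trans lt_ij lt_j.
  have := len_mono (ltnW lt_ij) lt_j; have := rank0_len scd lt_j.
  by have := rank0_len scd lt_i; lia.
- by have := rank0_len scd lt_i; lia.
Qed.

Lemma flatten_P_chains :
  flatten P_chains = map string_at (flatten [seq coord_chain kk | kk <- keys]).
Proof. by rewrite map_flatten -map_comp. Qed.

Lemma mem_coord_chains z : z \in flatten [seq coord_chain kk | kk <- keys] -> P_coord cs z.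
Proof.
case/flatten_mapP => kk; rewrite mem_keys => valid /mem_coord_chain[t le_t ->].
by case: (chain_point_valid valid le_t).
Qed.

Lemma uniq_P_chains : uniq (flatten P_chains).
Proof.
rewrite flatten_P_chains map_inj_in_uniq; last first.
  by move=> z z' /mem_coord_chains Pz /mem_coord_chains Pz'; apply: string_at_inj.
apply: (@uniq_flatten_keyed _ _ key_of keys coord_chain).
- by rewrite filter_uniq ?undup_uniq.
- move=> kk _; rewrite map_inj_in_uniq ?iota_uniq // => t t' _ _ E.
  have := congr1 (fun z : coord => z.2.1 + z.2.2) E.
  by rewrite /chain_point /=; case: ifP => _; rewrite !hook_sum; lia.
- move=> kk; rewrite mem_keys => valid z /mem_coord_chain[t le_t ->].
  by case: (chain_point_valid valid le_t).
Qed.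

Lemma mem_P_chains A :
  (A \in flatten P_chains) = (A \in [set cat_rev p.1 p.2 | p in P_pairs cs]).
Proof.
rewrite flatten_P_chains; apply/mapP/imsetP => [[z z_chains ->] | [p]].
  have Pz := mem_coord_chains z_chains.
  exists (elt cs z.1.1 z.2.1, elt cs z.1.2 z.2.2) => //.
  by apply/(P_pairs_coords scd); exists z.
case/(P_pairs_coords scd) => z Pz -> ->.
have [kk [t [valid le_t ->]]] := chain_point_onto Pz.
exists (chain_point kk t) => //; apply/flatten_mapP; exists kk; rewrite ?mem_keys //.
by apply: map_f; rewrite mem_iota ltnS.
Qed.

Lemma P_pairs_scd : is_scd [set cat_rev p.1 p.2 | p in P_pairs cs] (k + k) P_chains.
Proof.
apply/andP; split.
  by apply/allP => c /mapP[kk]; rewrite mem_keys => valid ->; apply: string_chain_scd.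
apply: uniq_perm; rewrite ?uniq_P_chains ?enum_uniq // => A.
by rewrite mem_enum mem_P_chains.
Qed.

End ChainDecomposition.

Theorem mainTheorem9 (k : nat) (cs : seq (seq {set 'I_k})) :
  0 < k ->
  is_scd [set: {set 'I_k}] k cs ->
  sorted geq (map size cs) ->
  (exists cs2 : seq (seq {set 'I_(k + k)}),
      is_scd [set cat_rev p.1 p.2 | p in P_pairs cs] (k + k) cs2) /\
  [/\ {in P_pairs cs &, injective (@pair_map k)},
      (@pair_map k) @: P_pairs cs = quot_poset (Grho k)
    & {in P_pairs cs &, forall p q,
          cat_rev p.1 p.2 \subset cat_rev q.1 q.2 ->
          qle (pair_map p) (pair_map q)}].
Proof.
move=> _ scd sorted_cs; split; first by exists (P_chains cs); apply: P_pairs_scd.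
split; [exact: pair_map_inj | exact: pair_map_onto |].
by move=> p q _ _; apply: pair_map_mono.
Qed.
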